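(* Let $c>1$. Then for all sufficiently small $\alpha>0$ and all $\lambda>\lambda(\alpha)$ (a threshold depending on $\alpha$ and $c$), there exist a probability space with an $\alpha$-homogeneous atomic filtration and a function $f\in L^1$ with $\|Sf\|_\infty=1$ such that \[ \bigl|\{x\in\mathcal{X}: f(x)>\lambda\}\bigr|>e^{-c\alpha\lambda^2}. \]
   Context: An atomic filtration on a probability space $(\mathcal{X},\mathcal{F},\sigma)$ is an increasing sequence of $\sigma$-algebras $\mathcal{F}_n\subset\mathcal{F}$, $n\ge0$, with $\mathcal{F}_0=\{\varnothing,\mathcal{X}\}$, $\mathcal{F}$ generated by the $\mathcal{F}_n$, and such that for each $n$ there is a countable collection $\mathcal{D}_n$ of disjoint sets (''cubes'') with every set of $\mathcal{F}_n$ a union of sets of $\mathcal{D}_n$. Write $\mathcal{D}=\bigcup_n\mathcal{D}_n$, $|A|=\sigma(A)$, and for $Q\in\mathcal{D}_n$ let $\operatorname{ch}Q=\{R\in\mathcal{D}_{n+1}:R\subset Q\}$. The filtration is $\alpha$-homogeneous ($0<\alpha\le1/2$) if $|Q'|\ge\alpha|Q|$ for every cube $Q$ and every $Q'\in\operatorname{ch}Q$. For $|A|>0$, $\langle f\rangle_A=|A|^{-1}\int_A f$. Let $\mathbf{E}_Q f=\langle f\rangle_Q\mathbf{1}_Q$, $\Delta_Q=\sum_{R\in\operatorname{ch}Q}\mathbf{E}_R-\mathbf{E}_Q$, and $S f=\bigl(\sum_{Q\in\mathcal{D}}|\Delta_Q f|^2\bigr)^{1/2}$. *)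

From HB Require Import structures.
From mathcomp Require Import all_boot all_order all_algebra.
From mathcomp Require Import all_classical all_reals all_analysis.
From mathcomp Require Import ess_sup_inf.
Set Implicit Arguments. Unset Strict Implicit. Unset Printing Implicit Defensive.
Import Order.TTheory GRing.Theory Num.Theory.
Import numFieldNormedType.Exports.
Local Open Scope classical_set_scope.
Local Open Scope ring_scope.

Section atomic_filtrations.
Context {d : measure_display} {T : measurableType d} {R : realType}.
Variable P : probability T R.

Definition atomic_filtration (F D : nat -> set (set T)) : Prop :=
  [/\ (forall n, sigma_algebra setT (F n)),
      (forall n, F n `<=` measurable),
      (forall n, F n `<=` F n.+1) /\ F 0%N = [set set0; setT],
      (@measurable d T = <<s \bigcup_n F n >>) &
      (forall n, [/\ countable (D n), D n `<=` F n,
          (forall Q Q', D n Q -> D n Q' -> Q <> Q' -> Q `&` Q' = set0) &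
          (forall A, F n A -> exists C, C `<=` D n /\ A = \bigcup_(Q in C) Q)])].

Definition ch (D : nat -> set (set T)) (n : nat) (Q : set T) : set (set T) :=
  [set R | D n.+1 R /\ R `<=` Q].

Definition homogeneous (D : nat -> set (set T)) (alpha : R) : Prop :=
  [/\ 0 < alpha, alpha <= 2^-1 &
      forall n Q Q', D n Q -> ch D n Q Q' -> (alpha%:E * P Q <= P Q')%E].

Definition avg (A : set T) (f : T -> R) : R :=
  (fine (P A))^-1 * fine (\int[P]_(x in A) (f x)%:E)%E.

Definition EQ (Q : set T) (f : T -> R) : T -> R :=
  fun x => avg Q f * \1_Q x.

(** Delta_Q f = sum_{R in ch Q} E_R f - E_Q f ; the sum over the disjoint
    children has at most one nonzero term at each point (finite support sum). *)
Definition DeltaQ (D : nat -> set (set T)) (n : nat) (Q : set T)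
    (f : T -> R) : T -> R :=
  fun x => (\sum_(Rc \in ch D n Q) EQ Rc f x) - EQ Q f x.

Definition esqrt (y : \bar R) : \bar R :=
  match y with
  | r%:E => (Num.sqrt r)%:E
  | +oo%E => +oo%E
  | -oo%E => 0%E
  end.

Definition Sfun (D : nat -> set (set T)) (f : T -> R) : T -> \bar R :=
  fun x => esqrt (\esum_(nQ in [set nQ : nat * set T | D nQ.1 nQ.2])
                    ((DeltaQ D nQ.1 nQ.2 f x) ^+ 2)%:E).

End atomic_filtrations.

From HB Require Import structures.
From mathcomp Require Import all_boot all_order all_algebra.
From mathcomp Require Import all_classical all_reals all_analysis.
From mathcomp Require Import ess_sup_inf.
From mathcomp Require Import zify ring lra measurable_realfun.
Set Implicit Arguments. Unset Strict Implicit. Unset Printing Implicit Defensive.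
Import Order.TTheory GRing.Theory Num.Theory.
Import numFieldNormedType.Exports.
Local Open Scope classical_set_scope.
Local Open Scope ring_scope.

(* The extremal example is a stopped random walk.  On the points 0, 1, ..., N
   (the points >= N forming a single atom) the cubes of generation n are the
   atoms {k}, k < n, and the tail [n, oo), which splits into the atom {n}, of
   relative mass a, and the tail [n+1, oo).  The martingale [walk] drops by
   (1-a) s on {n} and rises by a s on [n+1, oo), so it equals N a s on the last
   atom, of mass (1-a)^N >= exp(-N a / (1-a)), while its square function is
   largest on the atom N-1, where (S f)^2 = ((N-1) a^2 + (1-a)^2) s^2.
   Normalizing this to 1 makes f about sqrt N on the last atom; hence for
   N ~ (3+c)/4 lambda^2 and a small, f exceeds lambda on a set of mass larger
   than exp(-c a lambda^2). *)

Definition tail (m : nat) : set nat := [set k | (m <= k)%N].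

Definition tail_const (M : nat) : set (set nat) :=
  [set A | forall k, (M <= k)%N -> (A k <-> A M)].

Lemma sigma_algebra_tail_const M : sigma_algebra setT (tail_const M).
Proof.
split.
- by move=> k _; split.
- move=> A HA k Mk; rewrite /setD /=; split => -[_ Ak]; split => //; move: Ak;
  by rewrite (HA k Mk).
- move=> A HA k Mk; split => -[i _ Ai]; exists i => //; first by rewrite -(HA i k Mk).
  by rewrite (HA i k Mk).
Qed.

Lemma tail_const_le M M' : (M <= M')%N -> tail_const M `<=` tail_const M'.
Proof. by move=> MM' A HA k M'k; rewrite (HA k) ?(HA M') // (leq_trans MM'). Qed.

Lemma tail_const0 : tail_const 0 = [set set0; setT].
Proof.
apply/seteqP; split => [A HA|A [] -> k _] //.
have [A0|nA0] := pselect (A 0%N).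
  by right; apply/seteqP; split => // k _; rewrite (HA k).
by left; apply/seteqP; split => // k Ak; apply: nA0; rewrite -(HA k).
Qed.

Lemma tail_const_set1 M j : (j < M)%N -> tail_const M [set j].
Proof. by move=> jM k Mk /=; split => jk; lia. Qed.

Lemma tail_const_tail M m : (m <= M)%N -> tail_const M (tail m).
Proof. by move=> mM k Mk; rewrite /tail /=; split => _; lia. Qed.

Definition cube (m k : nat) : set nat := if (k < m)%N then [set k] else tail m.

Lemma cube_lt m k : (k < m)%N -> cube m k = [set k].
Proof. by rewrite /cube => ->. Qed.

Lemma cube_ge m k : (m <= k)%N -> cube m k = tail m.
Proof. by rewrite /cube ltnNge => ->. Qed.

Lemma cube_id m k : cube m k k.
Proof. by case: (ltnP k m) => km; [rewrite cube_lt | rewrite cube_ge]. Qed.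

Lemma tail_const_cube m k : tail_const m (cube m k).
Proof.
case: (ltnP k m) => km; first by rewrite cube_lt //; exact: tail_const_set1.
by rewrite cube_ge //; exact: tail_const_tail.
Qed.

Lemma cube_sub m k A : tail_const m A -> A k -> cube m k `<=` A.
Proof.
move=> HA Ak; case: (ltnP k m) => km; first by rewrite cube_lt // => j ->.
by rewrite cube_ge // => j /= mj; rewrite (HA j mj) -(HA k).
Qed.

Lemma cube_eq m k x : cube m k x -> cube m k = cube m x.
Proof.
case: (ltnP k m) => km; first by rewrite cube_lt // => /= ->; rewrite cube_lt.
by rewrite cube_ge // => /= mx; rewrite cube_ge.
Qed.

Lemma cube_disj m k k' : cube m k <> cube m k' -> cube m k `&` cube m k' = set0.
Proof.
move=> ne; apply/seteqP; split => // x [kx k'x]; apply: ne.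
by rewrite (cube_eq kx) (cube_eq k'x).
Qed.

Definition filtration (N n : nat) : set (set nat) := tail_const (minn n N).

Definition cubes (N n : nat) : set (set nat) := range (cube (minn n N)).

Definition generators (N : nat) : set (set nat) := \bigcup_n filtration N n.

Notation space N := (g_sigma_algebraType (generators N)).

Lemma atomic_filtration_cubes N :
  @atomic_filtration _ (space N) (filtration N) (cubes N).
Proof.
split => [n|n A FA|||n].
- exact: sigma_algebra_tail_const.
- by apply: sub_gen_smallest; exists n.
- by split => [n|]; [apply: tail_const_le; lia | rewrite /filtration min0n tail_const0].
- by [].
- split => [|_ [k _ <-]|_ _ [k _ <-] [k' _ <-]|A FA].
  + exact/(sub_countable (card_image_le _ _))/countableP.
  + exact: tail_const_cube.
  + exact: cube_disj.
  + exists [set Q | cubes N n Q /\ Q `<=` A]; split => [Q []//|].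
    apply/seteqP; split => [x Ax|x [Q [_ QA] /QA//]].
    exists (cube (minn n N) x); last exact: cube_id.
    by split; [exists x | exact: cube_sub].
Qed.

Section space.
Variable N : nat.

Lemma measurable_tail_const (A : set (space N)) : tail_const N A -> measurable A.
Proof. by move=> NA; apply: sub_gen_smallest; exists N; rewrite // /filtration minnn. Qed.

Lemma measurable_fun_tail_const d' (T' : measurableType d') (g : space N -> T') :
  (forall k, (N <= k)%N -> g k = g N) -> measurable_fun setT g.
Proof.
move=> gN _ Y _; rewrite setTI; apply: measurable_tail_const => k Nk /=.
by rewrite /preimage /= gN.
Qed.

Local Notation ch := (@ch _ (space N) (cubes N)).

Lemma ch_set1 n k : (k < minn n N)%N -> ch n [set k] = [set [set k]].
Proof.
move=> kn; apply/seteqP; split => [Q [[j _ <-] jk]|Q /= ->].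
  case: (ltnP j (minn n.+1 N)) => jn; first by rewrite cube_lt // (jk j (cube_id _ _)).
  move: jk; rewrite cube_ge // => jk.
  by move: (jk _ (leqnn (minn n.+1 N))) (jk _ (leqnSn (minn n.+1 N))) => /= ->; lia.
by split => //; exists k => //; rewrite cube_lt //; lia.
Qed.

Lemma ch_tail_lt n : (n < N)%N -> ch n (tail n) = [set [set n]] `|` [set tail n.+1].
Proof.
move=> nN; have En : minn n.+1 N = n.+1 by lia.
apply/seteqP; split => [Q [[j _ <-] jn]|Q [|] /= ->].
- rewrite En in jn *; case: (ltnP j n.+1) => jn1; last by right; rewrite cube_ge.
  left; rewrite cube_lt //=; have /= := jn j (cube_id _ _).
  by rewrite /tail /= => nj; congr [set _]; lia.
- by split; [exists n; rewrite ?En ?cube_lt | move=> j /= ->; rewrite /tail /=].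
- by split; [exists n.+1; rewrite ?En ?cube_ge | move=> j; rewrite /tail /=; lia].
Qed.

Lemma ch_tail_ge n : (N <= n)%N -> ch n (tail N) = [set tail N].
Proof.
move=> Nn; have En : minn n.+1 N = N by lia.
apply/seteqP; split => [Q [[j _ <-] jN]|Q /= ->].
  rewrite En in jN *; case: (ltnP j N) => jN'; last by rewrite cube_ge.
  by have /= := jN j (cube_id _ _); rewrite /tail /=; lia.
by split => //; exists N => //; rewrite En cube_ge.
Qed.

End space.

Lemma sum_tail_telescope (V : zmodType) (N m : nat) (h g : nat -> V) :
  (m <= N)%N -> (forall k, (k < N)%N -> h k = g k - g k.+1) -> h N = g N ->
  \sum_(m <= k < N.+1) h k = g m.
Proof.
move=> mN hg hN; rewrite big_nat_recr //= hN.
rewrite (@telescope_sumr_eq _ _ _ (fun k => - g k)) //.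
  by rewrite opprK addrAC addNr add0r.
by move=> k /andP[_ kN] /=; rewrite hg // opprK addrC.
Qed.

Section indicator_sums.
Variables (R : pzRingType) (N : nat) (h : nat -> R).

Lemma sum_mem_tail m :
  \sum_(k < N.+1) h k * ((k : nat) \in tail m)%:R = \sum_(m <= k < N.+1) h k.
Proof.
rewrite big_geq_mkord [RHS]big_mkcond /=; apply: eq_bigr => k _.
have -> : ((k : nat) \in tail m) = (m <= k)%N by apply/idP/idP => [/set_mem|/mem_set].
by case: (m <= k)%N; rewrite ?mulr1 ?mulr0.
Qed.

Lemma sum_mem_set1 j : (j <= N)%N ->
  \sum_(k < N.+1) h k * ((k : nat) \in [set j])%:R = h j.
Proof.
move=> jN; rewrite (bigD1 (Ordinal (jN : (j < N.+1)%N))) //= mem_set // mulr1 big1 ?addr0 //.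
move=> k /eqP kj; rewrite memNset ?mulr0 // => /= jk; apply: kj; exact: val_inj.
Qed.

End indicator_sums.

Section geometric_measure.
Variables (R : realType) (a : R) (N : nat).
Hypotheses (a_gt0 : 0 < a) (a_lt1 : a < 1).

Definition weight (k : nat) : R :=
  if (k < N)%N then a * (1 - a) ^+ k else (1 - a) ^+ N.

Lemma weight_gt0 k : 0 < weight k.
Proof.
have a1 : 0 < 1 - a by rewrite subr_gt0.
by rewrite /weight; case: ifP => _; rewrite ?mulr_gt0 // exprn_gt0.
Qed.

Lemma weight_telescope k : (k < N)%N -> weight k = (1 - a) ^+ k - (1 - a) ^+ k.+1.
Proof. by move=> kN; rewrite /weight kN exprS; ring. Qed.

Definition mass (A : set nat) : R := \sum_(k < N.+1) weight k * ((k : nat) \in A)%:R.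

Lemma mass_ge0 A : 0 <= mass A.
Proof. by apply: sumr_ge0 => k _; rewrite mulr_ge0 ?ler0n // ltW ?weight_gt0. Qed.

Lemma weight_le_mass j (A : set nat) : (j <= N)%N -> A j -> weight j <= mass A.
Proof.
move=> jN Aj; rewrite /mass (bigD1 (Ordinal (jN : (j < N.+1)%N))) //= mem_set // mulr1.
by rewrite lerDl; apply: sumr_ge0 => k _; rewrite mulr_ge0 ?ler0n // ltW ?weight_gt0.
Qed.

Lemma mass_tail m : (m <= N)%N -> mass (tail m) = (1 - a) ^+ m.
Proof.
move=> mN; rewrite /mass sum_mem_tail; apply: sum_tail_telescope => //.
  exact: weight_telescope.
by rewrite /weight ltnn.
Qed.

Lemma mass_setT : mass setT = 1.
Proof. by rewrite (_ : setT = tail 0) ?mass_tail //; apply/seteqP; split. Qed.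

Lemma mass_set1 j : (j <= N)%N -> mass [set j] = weight j.
Proof. exact: sum_mem_set1. Qed.

(* The norm only supplies the nonnegativity proof required by [mscale]. *)
Definition geometric_mu : {measure set (space N) -> \bar R} :=
  msum (fun k => mscale (NngNum (normr_ge0 (weight k))) (@dirac _ (space N) k R)) N.+1.

(* [geometric_mu] already has total mass 1, so normalizing it changes nothing;
   the dirac fallback of [mnormalize] is never used. *)
Definition geometric : probability (space N) R :=
  mnormalize geometric_mu (@dirac _ (space N) 0%N R).

Lemma geometric_muE A : geometric_mu A = (mass A)%:E.
Proof.
rewrite /geometric_mu /msum /mass -sumEFin; apply: eq_bigr => k _.
transitivity (`|weight k|%:E * @dirac _ (space N) k R A)%E; first by [].
by rewrite diracE ger0_norm ?ltW ?weight_gt0 // EFinM.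
Qed.

Lemma geometricE A : geometric A = (mass A)%:E.
Proof.
rewrite /= /mnormalize geometric_muE mass_setT.
have -> : ((1%:E : \bar R) == 0%E) = false by apply/negbTE; rewrite eqe oner_neq0.
by rewrite /= geometric_muE invr1 mule1.
Qed.

Lemma integral_geometric (A : set (space N)) (g : space N -> R) : measurable A ->
  (forall k, (N <= k)%N -> g k = g N) ->
  (\int[geometric]_(x in A) (g x)%:E =
    (\sum_(k < N.+1) weight k * ((k : nat) \in A)%:R * g k)%:E)%E.
Proof.
move=> mA gN.
have mg : measurable_fun A (EFin \o g).
  by apply: measurable_funTS; apply: measurable_fun_tail_const => k Nk /=; rewrite gN.
have int_dirac (h : space N -> \bar R) :
    measurable_fun A h -> (forall x, A x -> 0 <= h x)%E ->
    (\int[geometric_mu]_(x in A) h x =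
      \sum_(k < N.+1) (weight k * ((k : nat) \in A)%:R)%:E * h k)%E.
  move=> mh h0; rewrite ge0_integral_measure_sum //; apply: eq_bigr => k _.
  rewrite ge0_integral_mscale // integral_dirac // diracE /= ger0_norm ?ltW ?weight_gt0 //.
  by rewrite EFinM muleA.
have posneg (x : R) : Num.max x 0 - Num.max (- x) 0 = x.
  by rewrite !maxElt; case: ifP; case: ifP; rewrite ?oppr_lt0; lra.
rewrite (eq_measure_integral geometric_mu) => [|B _ _]; last first.
  exact: etrans (geometricE B) (esym (geometric_muE B)).
rewrite integralE !int_dirac //; try exact: measurable_funepos; try exact: measurable_funeneg.
under eq_bigr do rewrite funeposE /= -EFin_max -EFinM.
under [X in (_ - X)%E]eq_bigr do rewrite funenegE /= -EFin_max -EFinM.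
rewrite !sumEFin -EFinB -sumrB; congr EFin; apply: eq_bigr => k _.
by rewrite -mulrBr posneg.
Qed.

Lemma ess_sup_geometric (h : space N -> \bar R) j : (j <= N)%N ->
  (forall x, (h x <= h j)%E) -> ess_sup geometric h = h j.
Proof.
move=> jN hj; apply/eqP; rewrite eq_le; apply/andP; split.
  by apply/ess_supP; apply: nearW.
rewrite leNgt; apply/negP => ess_lt.
have [A [_ A0 sub]] := ess_sup_ge geometric h.
have Aj : A j by apply: sub => /=; apply/negP; rewrite -ltNge.
have := weight_le_mass jN Aj; rewrite -lee_fin -geometricE A0.
by rewrite leNgt lte_fin weight_gt0.
Qed.

Lemma homogeneous_cubes : a <= 2^-1 -> homogeneous geometric (cubes N) a.
Proof.
move=> a_half; have a_le : a <= 1 - a by lra.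
split => // n Q Q' [k _ <-].
rewrite !geometricE // -EFinM lee_fin.
have le_mass A : a * mass A <= mass A.
  by rewrite ler_piMl ?mass_ge0 // ltW.
case: (ltnP k (minn n N)) => kn; first by rewrite cube_lt // ch_set1 // => /= ->.
rewrite cube_ge //; case: (ltnP n N) => nN; last by rewrite ch_tail_ge // => /= ->.
rewrite ch_tail_lt // mass_tail ?(ltnW nN) // => -[] /= ->.
  by rewrite mass_set1 ?(ltnW nN) // /weight nN.
by rewrite mass_tail // exprS ler_wpM2r // exprn_ge0 // subr_ge0 ltW.
Qed.

End geometric_measure.

Section walk.
Variables (R : realType) (a s : R) (N : nat).
Hypotheses (a_gt0 : 0 < a) (a_lt1 : a < 1).
Local Notation weight := (weight a N).
Local Notation geometric := (geometric a N).
Local Notation DeltaQ := (DeltaQ geometric (cubes N)).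

Definition walk (k : nat) : R :=
  if (k < N)%N then (k%:R * a - (1 - a)) * s else N%:R * a * s.

Lemma walk_tail k : (N <= k)%N -> walk k = walk N.
Proof. by rewrite /walk ltnn ltnNge => ->. Qed.

Lemma sum_weight_walk m : (m <= N)%N ->
  \sum_(m <= k < N.+1) weight k * walk k = m%:R * a * s * (1 - a) ^+ m.
Proof.
move=> mN; apply: (sum_tail_telescope (g := fun k => k%:R * a * s * (1 - a) ^+ k)) => //.
  by move=> k kN; rewrite /weight /walk kN exprS -natr1; ring.
by rewrite /weight /walk ltnn mulrC.
Qed.

Lemma integral_walk (A : set (space N)) : measurable A ->
  (\int[geometric]_(x in A) (walk x)%:E =
    (\sum_(k < N.+1) weight k * walk k * ((k : nat) \in A)%:R)%:E)%E.
Proof.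
move=> mA; rewrite integral_geometric //; last exact: walk_tail.
by congr EFin; apply: eq_bigr => k _; rewrite mulrAC.
Qed.

Lemma avg_walk_set1 j : (j < N)%N -> avg geometric [set j] walk = walk j.
Proof.
move=> jN; have jN' := ltnW jN.
rewrite /avg geometricE // integral_walk /=; last first.
  by apply: measurable_tail_const; exact: tail_const_set1.
rewrite mass_set1 // (sum_mem_set1 (fun k => weight k * walk k)) //.
by rewrite mulKf // lt0r_neq0 // weight_gt0.
Qed.

Lemma avg_walk_tail m : (m <= N)%N -> avg geometric (tail m) walk = m%:R * a * s.
Proof.
move=> mN; rewrite /avg geometricE // integral_walk /=; last first.
  by apply: measurable_tail_const; exact: tail_const_tail.
rewrite mass_tail // (sum_mem_tail _ (fun k => weight k * walk k)) sum_weight_walk //.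
by rewrite mulrC mulfK // lt0r_neq0 // exprn_gt0 // subr_gt0.
Qed.

Lemma integrable_walk : geometric.-integrable setT (EFin \o walk).
Proof.
apply/integrableP; split.
  by apply: measurable_fun_tail_const => k Nk /=; rewrite walk_tail.
rewrite (eq_integral (fun x : space N => `|walk x|%:E)) //.
by rewrite integral_geometric ?ltry // => k Nk; rewrite walk_tail.
Qed.

Lemma integral_walk0 : fine (\int[geometric]_x (walk x)%:E)%E = 0.
Proof.
have -> : [set: space N] = tail 0 by apply/seteqP; split.
rewrite integral_walk /=; last by apply: measurable_tail_const; exact: tail_const_tail.
by rewrite (sum_mem_tail _ (fun k => weight k * walk k)) sum_weight_walk // !mul0r.
Qed.

Definition jump (n x : nat) : R :=
  if x == n then - ((1 - a) * s) else if (n < x)%N then a * s else 0.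

Lemma DeltaQ_set1 n k x : (k < minn n N)%N -> DeltaQ n [set k] walk x = 0.
Proof. by move=> kn; rewrite /DeltaQ ch_set1 // fsbig_set1 subrr. Qed.

Lemma DeltaQ_tail_ge n x : (N <= n)%N -> DeltaQ n (tail N) walk x = 0.
Proof. by move=> Nn; rewrite /DeltaQ ch_tail_ge // fsbig_set1 subrr. Qed.

Lemma DeltaQ_tail_lt n x : (n < N)%N -> DeltaQ n (tail n) walk x = jump n x.
Proof.
move=> nN; have nN' := ltnW nN.
have disj : [set [set n]] `&` [set tail n.+1] `<=` (set0 : set (set (space N))).
  move=> Q [/= -> nn1]; have /= : [set n] n.+1 by rewrite nn1 /tail /=.
  lia.
rewrite /DeltaQ ch_tail_lt // fsbigU0 // !fsbig_set1 /EQ.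
rewrite avg_walk_set1 // !avg_walk_tail //.
rewrite !indicE /jump /walk nN.
have -> : (x \in [set n]) = (x == n).
  by apply/idP/idP => [/set_mem/= ->|/eqP ->]; [|apply/mem_set].
have -> : (x \in tail n.+1) = (n < x)%N by apply/idP/idP => [/set_mem|/mem_set].
have -> : (x \in tail n) = (n <= x)%N by apply/idP/idP => [/set_mem|/mem_set].
by case: (ltngtP x n) => /= _; rewrite ?mulr0 ?mulr1 -?natr1; ring.
Qed.

Lemma sum_jump_sqr M x : \sum_(n < M) jump n x ^+ 2 =
  (minn x M)%:R * (a * s) ^+ 2 + (x < M)%N%:R * ((1 - a) * s) ^+ 2.
Proof.
elim: M => [|M IH]; first by rewrite big_ord0 minn0 ltn0 !mul0r addr0.
rewrite big_ord_recr /= IH /jump.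
case: (ltngtP x M) => [xM|Mx|->].
- by rewrite (minn_idPl (leqW (ltnW xM))) ltnS (ltnW xM) expr0n addr0.
- by rewrite (minn_idPr Mx) ltnNge Mx /= -natr1; ring.
- by rewrite (minn_idPl (leqnSn M)) ltnSn /=; ring.
Qed.

Lemma DeltaQ_off_tail n Q x : cubes N n Q -> ~ ((n < N)%N /\ Q = tail n) ->
  DeltaQ n Q walk x = 0.
Proof.
move=> [k _ <-] ntail; case: (ltnP k (minn n N)) => kn.
  by rewrite cube_lt // DeltaQ_set1.
rewrite cube_ge // in ntail *; case: (ltnP n N) => nN; last by rewrite DeltaQ_tail_ge.
by exfalso; apply: ntail; rewrite (minn_idPl (ltnW nN)).
Qed.

Lemma esum_DeltaQ_sqr x :
  (\esum_(nQ in [set nQ : nat * set (space N) | cubes N nQ.1 nQ.2])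
    ((DeltaQ nQ.1 nQ.2 walk x) ^+ 2)%:E = (\sum_(n < N) jump n x ^+ 2)%:E)%E.
Proof.
pose B : set (nat * set (space N)) := (fun n => (n, tail n)) @` `I_N.
rewrite (esumID B) => [|nQ _]; last by rewrite lee_fin sqr_ge0.
rewrite [X in (_ + X)%E]esum1 ?adde0 => [|[n Q] [nQ nB]]; last first.
  rewrite /= DeltaQ_off_tail ?expr0n // => -[nN Qn].
  by apply: nB; exists n; rewrite ?Qn.
rewrite setIidr => [|_ [n /= nN <-]]; last first.
  by exists n; rewrite //= cube_ge (minn_idPl (ltnW nN)).
rewrite esum_image => [|i j _ _ [] //].
rewrite (eq_esum (b := fun n => (jump n x ^+ 2)%:E)) => [|n /= nN]; last first.
  by rewrite DeltaQ_tail_lt.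
rewrite esum_fset => [|//|n _]; last by rewrite lee_fin sqr_ge0.
by rewrite -fsbig_ord sumEFin.
Qed.

Lemma Sfun_walk x :
  Sfun geometric (cubes N) walk x = (Num.sqrt (\sum_(n < N) jump n x ^+ 2))%:E.
Proof. by rewrite /Sfun esum_DeltaQ_sqr. Qed.

Lemma sum_jump_sqr_last : (0 < N)%N ->
  \sum_(n < N) jump n N.-1 ^+ 2 = ((N.-1)%:R * a ^+ 2 + (1 - a) ^+ 2) * s ^+ 2.
Proof. by move=> N0; rewrite sum_jump_sqr (minn_idPl (leq_pred N)) ltn_predL N0 /=; ring. Qed.

Lemma sum_jump_sqr_le x : (0 < N)%N -> a <= 1 - a ->
  \sum_(n < N) jump n x ^+ 2 <= \sum_(n < N) jump n N.-1 ^+ 2.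
Proof.
move=> N0 a_le; rewrite !sum_jump_sqr (minn_idPl (leq_pred N)) ltn_predL N0 mul1r.
have as_le : (a * s) ^+ 2 <= ((1 - a) * s) ^+ 2.
  rewrite !exprMn ler_wpM2r ?sqr_ge0 // ler_sqr ?nnegrE //; [exact: ltW | by rewrite subr_ge0 ltW].
case: (ltnP x N) => xN.
  by rewrite mul1r lerD2r ler_wpM2r ?sqr_ge0 // ler_nat -ltnS prednK.
by rewrite mul0r addr0 -{1}(prednK N0) -natr1 mulrDl mul1r lerD2l.
Qed.

Lemma ess_sup_Sfun_walk : (0 < N)%N -> a <= 1 - a ->
  ess_sup geometric (Sfun geometric (cubes N) walk) =
  (Num.sqrt (((N.-1)%:R * a ^+ 2 + (1 - a) ^+ 2) * s ^+ 2))%:E.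
Proof.
move=> N0 a_le; rewrite -sum_jump_sqr_last // -Sfun_walk.
apply: ess_sup_geometric => // [|x]; first exact: leq_pred.
rewrite !Sfun_walk lee_fin ler_sqrt ?sum_jump_sqr_le //.
by apply: sumr_ge0 => n _; exact: sqr_ge0.
Qed.

Lemma walk_level_ge lambda : lambda < N%:R * a * s ->
  (((1 - a) ^+ N)%:E <= geometric [set x | (lambda < walk x)%R])%E.
Proof.
move=> lt; rewrite geometricE // lee_fin.
have := @weight_le_mass _ _ N a_gt0 a_lt1 N [set x | lambda < walk x] (leqnn N).
by rewrite /weight ltnn; apply; rewrite /= /walk ltnn.
Qed.

End walk.

Lemma expRN_lt_pow1B (R : realType) (a y : R) (N : nat) : 0 < a -> a < 1 ->
  N%:R * a / (1 - a) < y -> expR (- y) < (1 - a) ^+ N.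
Proof.
move=> a_gt0 a_lt1 Ny; have a1 : 0 < 1 - a by rewrite subr_gt0.
have exp_le : expR (- (a / (1 - a))) <= 1 - a.
  rewrite expRN -[X in _ <= X]invrK lef_pV2 ?posrE ?expR_gt0 ?invr_gt0 //.
  have {1}-> : (1 - a)^-1 = 1 + a / (1 - a) by field; rewrite gt_eqF.
  exact: expR_ge1Dx.
apply: (@lt_le_trans _ _ (expR (N%:R * - (a / (1 - a))))).
  by rewrite ltr_expR mulrN mulrA ltrN2.
by rewrite expRM_natl lerXn2r // nnegrE ?expR_ge0 // ltW.
Qed.

Lemma top_square_gt0 (R : realType) (a : R) (N : nat) : a < 1 ->
  0 < (N.-1)%:R * a ^+ 2 + (1 - a) ^+ 2.
Proof.
move=> a_lt1; apply: ltr_wpDl; first by rewrite mulr_ge0 ?ler0n ?sqr_ge0.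
by rewrite exprn_gt0 // subr_gt0.
Qed.

Lemma lt_half_of_lt_threshold (R : realType) (c alpha : R) : 1 < c ->
  alpha < (c - 1) / (2 * c) -> alpha < 2^-1.
Proof.
move=> c_gt1 alpha_lt; have c_gt0 : 0 < c by lra.
by apply: (lt_trans alpha_lt); rewrite ltr_pdivrMr ?mulr_gt0 //; lra.
Qed.

Lemma tail_exponent_lt (R : realType) (c alpha L n : R) : 1 < c -> 0 < alpha ->
  alpha < (c - 1) / (2 * c) -> 4 / (c - 1) < L -> n <= (3 + c) / 4 * L + 1 ->
  n * alpha / (1 - alpha) < c * alpha * L.
Proof.
move=> c_gt1 alpha_gt0 alpha_lt L_gt n_le.
have := lt_half_of_lt_threshold c_gt1 alpha_lt => ?.
have {}alpha_lt : alpha * (2 * c) < c - 1 by rewrite -ltr_pdivlMr // mulr_gt0 //; lra.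
have L_gt0 : 0 < L by apply: lt_trans L_gt; rewrite divr_gt0 //; lra.
have {L_gt} L4 : 4 < L * (c - 1) by rewrite -ltr_pdivrMr //; lra.
have acL : alpha * (2 * c) * L < (c - 1) * L by rewrite ltr_pM2r.
have n_lt : n < c * (1 - alpha) * L by lra.
rewrite ltr_pdivrMr; last by lra.
by move: n_lt; rewrite -(ltr_pM2r alpha_gt0) => ?; lra.
Qed.

Lemma lambda_lt_top_value (R : realType) (c alpha lambda : R) (N : nat) : 1 < c -> 0 < alpha ->
  alpha < 2^-1 -> 0 < lambda ->
  4 / (alpha ^+ 2 * (c - 1)) < lambda ^+ 2 -> (3 + c) / 4 * lambda ^+ 2 < N%:R ->
  lambda < N%:R * alpha / Num.sqrt ((N.-1)%:R * alpha ^+ 2 + (1 - alpha) ^+ 2).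
Proof.
move=> c_gt1 alpha_gt0 alpha_lt lam_gt0 L_gt N_gt.
have a2c : 0 < alpha ^+ 2 * (c - 1) by rewrite mulr_gt0 ?exprn_gt0 ?subr_gt0.
have {L_gt} L4 : 4 < lambda ^+ 2 * (alpha ^+ 2 * (c - 1)) by rewrite -ltr_pdivrMr.
have L_gt0 : 0 < lambda ^+ 2 by rewrite exprn_gt0.
have L_lt : lambda ^+ 2 < (3 + c) / 4 * lambda ^+ 2 by rewrite ltr_pMl //; lra.
have N_gt0 : (0 < N)%N by rewrite -(ltr0n R); lra.
have Na_gt0 : 0 < N%:R * alpha ^+ 2 by rewrite mulr_gt0 ?exprn_gt0 ?ltr0n.
have K_gt0 : 0 < (N.-1)%:R * alpha ^+ 2 + (1 - alpha) ^+ 2.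
  by apply: top_square_gt0; lra.
have NE : ((N.-1)%:R : R) = N%:R - 1 by rewrite -[in RHS](prednK N_gt0) -natr1 addrK.
rewrite NE in K_gt0 *; set K := (_ + _) in K_gt0 *.
(* As K <= N a^2 + 1, it suffices that N a^2 (N - lambda^2) > lambda^2, which
   follows from N - lambda^2 > (c-1)/4 lambda^2 and N a^2 (c-1) > 4. *)
have K_le : K <= N%:R * alpha ^+ 2 + 1 by rewrite /K; lra.
have NL_gt : lambda ^+ 2 * (alpha ^+ 2 * (c - 1)) < N%:R * (alpha ^+ 2 * (c - 1)).
  by rewrite ltr_pM2r //; lra.
have gap_gt : N%:R * alpha ^+ 2 * ((c - 1) / 4 * lambda ^+ 2) <
          N%:R * alpha ^+ 2 * (N%:R - lambda ^+ 2) by rewrite ltr_pM2l //; lra.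
have L4_lt : lambda ^+ 2 * 4 < lambda ^+ 2 * (N%:R * (alpha ^+ 2 * (c - 1))).
  by rewrite ltr_pM2l //; lra.
have LK_le : lambda ^+ 2 * K <= lambda ^+ 2 * (N%:R * alpha ^+ 2 + 1) by rewrite ler_pM2l.
rewrite ltr_pdivlMr ?sqrtr_gt0 // -ltr_sqr ?nnegrE ?mulr_ge0 ?sqrtr_ge0 ?ltW ?ltr0n //.
rewrite !exprMn sqr_sqrtr ?ltW //; lra.
Qed.

Theorem theorem6p1 (R : realType) (c : R) (hc : 1 < c) :
  exists alpha0 : R, 0 < alpha0 /\
  forall alpha : R, 0 < alpha -> alpha < alpha0 ->
  exists lambda0 : R, forall lambda : R, lambda0 < lambda ->
  exists (d : measure_display) (T : measurableType d) (P : probability T R)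
         (F D : nat -> set (set T)) (f : T -> R),
    [/\ atomic_filtration F D,
        homogeneous P D alpha,
        P.-integrable setT (EFin \o f) /\ fine (\int[P]_x (f x)%:E)%E = 0,
        ess_sup P (Sfun P D f) = 1%E &
        ((expR (- (c * alpha * lambda ^+ 2)))%:E < P [set x | (lambda < f x)%R])%E].
Proof.
exists ((c - 1) / (2 * c)); split => [|alpha a_gt0 a_lt]; first by rewrite divr_gt0 //; lra.
have a_half := lt_half_of_lt_threshold hc a_lt.
have a_lt1 : alpha < 1 by lra.
have p_ge0 : 0 <= 4 / (c - 1) by rewrite divr_ge0 //; lra.
have q_ge0 : 0 <= 4 / (alpha ^+ 2 * (c - 1)) by rewrite divr_ge0 // mulr_ge0 ?sqr_ge0 //; lra.
exists (4 / (c - 1) + 4 / (alpha ^+ 2 * (c - 1)) + 1) => lambda lam_gt.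
have lam_sqr : lambda < lambda ^+ 2 by rewrite expr2 ltr_pMr; lra.
have L_gt1 : 4 / (c - 1) < lambda ^+ 2 by lra.
have L_gt2 : 4 / (alpha ^+ 2 * (c - 1)) < lambda ^+ 2 by lra.
have lam_gt0 : 0 < lambda by lra.
pose N := (Num.truncn ((3 + c) / 4 * lambda ^+ 2)).+1.
have /andP[N_le N_gt] : (N.-1)%:R <= (3 + c) / 4 * lambda ^+ 2 < (N%:R : R).
  by apply: truncn_itv; rewrite mulr_ge0 ?sqr_ge0 // divr_ge0; lra.
have K_gt0 := top_square_gt0 N a_lt1.
pose s := (Num.sqrt ((N.-1)%:R * alpha ^+ 2 + (1 - alpha) ^+ 2))^-1.
exists _, (space N), (geometric alpha N), (filtration N), (cubes N), (walk alpha s N); split.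
- exact: atomic_filtration_cubes.
- exact/homogeneous_cubes/ltW.
- by split; [exact: integrable_walk | exact: integral_walk0].
- rewrite ess_sup_Sfun_walk //; last by lra.
  by rewrite /s exprVn sqr_sqrtr ?ltW // mulfV ?gt_eqF // sqrtr1.
- apply: (lt_le_trans _ (walk_level_ge _ _ _)) => //.
  rewrite lte_fin expRN_lt_pow1B //; apply: tail_exponent_lt => //.
    by rewrite /N -natr1 lerD2r.
  exact: (lambda_lt_top_value hc a_gt0 a_half lam_gt0 L_gt2 N_gt).
Qed.
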